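(* Let $(X,d)$ be a metric space and let $F$ be a semiflow on $X$ with strong compact dynamics. Then: (1) $\mathcal R_{\mathcal C}=\mathcal R_{\mathcal S}$; denote this common set by $\mathcal R$. (2) For all $x,y\in\mathcal R$, one has $x\succcurlyeq_{\mathcal C} y$ if and only if $x\succcurlyeq_{\mathcal S} y$. (3) A set $M\subset X$ is a Conley node if and only if it is a shadow node. (4) The graphs coincide: $\Gamma_{\mathcal C}=\Gamma_{\mathcal S}$.
   Context: A semiflow on a metric space $(X,d)$ is a continuous map $F:[0,\infty)\times X\to X$, $(t,x)\mapsto F^t(x)$, with $F^0=\mathrm{id}$ and $F^{t+s}=F^t\circ F^s$ for all $t,s\ge 0$. A curve is piecewise continuous if it is continuous except at finitely many points, at which one-sided limits exist. Conley chains: for $\varepsilon>0$, $T>0$, an $(\varepsilon,T)$-chain from $x$ to $y$ is a finite sequence $x=x_0,x_1,\dots,x_N=y$ in $X$ with times $t_i\ge T$ such that $d(F^{t_i}(x_i),x_{i+1})<\varepsilon$ for $i=0,\dots,N-1$. Write $x\succcurlyeq_{\mathcal C} y$ if for every $\varepsilon>0$ and $T>0$ there is an $(\varepsilon,T)$-chain from $x$ to $y$. Shadow chains: for $T\ge1$, a piecewise continuous curve $\gamma:[0,T]\to X$ is $\varepsilon$-close to $F$ if $d(\gamma(t+\tau),F^\tau(\gamma(t)))<\varepsilon$ for every $\tau\in[0,1]$ and $t\in[0,T-\tau]$. An $\varepsilon$-chain (shadow chain) from $x$ to $y$ is a piecewise continuous $\gamma:[0,T]\to X$, $T\ge 1$,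 with $\gamma(0)=x$, $\gamma(T)=y$, $\gamma$ $\varepsilon$-close to $F$. Write $x\succcurlyeq_{\mathcal S} y$ if for every $\varepsilon>0$ there is an $\varepsilon$-chain from $x$ to $y$. For $\star\in\{\mathcal C,\mathcal S\}$: a point $x$ is $\star$-chain-recurrent if either $x$ is a fixed point of $F$ or there is $y\in X$ with $x\succcurlyeq_\star y$ and $y\succcurlyeq_\star x$ (such $x,y$ are called $\star$-chain-equivalent); $\mathcal R_\star$ is the set of $\star$-chain-recurrent points. A $\star$-node (Conley node for $\mathcal C$, shadow node for $\mathcal S$) is a maximal subset of $\mathcal R_\star$ whose points are mutually $\star$-chain-equivalent. $\Gamma_\star$ is the directed graph whose vertices are the $\star$-nodes, with an edge from node $M$ to node $N$ iff there are $x\in M$, $y\in N$ with $x\succcurlyeq_\star y$. Compact dynamics: for $G\subset X$, $N_\varepsilon(G)=\{y: d(y,G)<\varepsilon\}$ and $W_\varepsilon(G)=\bigcup_{t\ge0}F^t(N_\varepsilon(G))$. A set $G$ attracts $K$ if for every $\varepsilon>0$ there is $T>0$ with $F^t(K)\subset N_\varepsilon(G)$ for all $t\ge T$. The global attractor $\mathcal G$ of $F$, if it exists, is a maximal invariant compact subset of $X$ attracting every compact $K\subset X$. It is strong if there is $\varepsilon>0$ such that $\mathcal G$ attracts $N_\varepsilon(\mathcal G)$ and the map $(t,z)\mapsto F^t(z)$ is uniformly continuous on $[0,1]\times W_\varepsilon(\mathcal G)$. $F$ has strong compact dynamics if it has a strong global attractor. *)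

From Stdlib Require Import Reals List.
Open Scope R_scope.

Section Defs.
Context {X : Type} (d : X -> X -> R).

Definition is_metric : Prop :=
  (forall x y, 0 <= d x y) /\
  (forall x y, d x y = 0 <-> x = y) /\
  (forall x y, d x y = d y x) /\
  (forall x y z, d x z <= d x y + d y z).

(** Semiflow: continuous on [0,oo) x X (product topology), F^0 = id,
    F^(t+s) = F^t o F^s for t, s >= 0.  Values at negative times are irrelevant. *)
Definition is_semiflow (F : R -> X -> X) : Prop :=
  (forall t0 x0, 0 <= t0 -> forall eps, 0 < eps -> exists delta, 0 < delta /\
     forall t x, 0 <= t -> Rabs (t - t0) < delta -> d x x0 < delta ->
       d (F t x) (F t0 x0) < eps) /\
  (forall x, F 0 x = x) /\
  (forall t s x, 0 <= t -> 0 <= s -> F (t + s) x = F t (F s x)).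

Variable F : R -> X -> X.

Definition conley_chain (eps T : R) (x y : X) : Prop :=
  exists (N : nat) (xs : nat -> X) (ts : nat -> R),
    (1 <= N)%nat /\ xs 0%nat = x /\ xs N = y /\
    forall i, (i < N)%nat -> T <= ts i /\ d (F (ts i) (xs i)) (xs (S i)) < eps.

Definition conley_succ (x y : X) : Prop :=
  forall eps T, 0 < eps -> 0 < T -> conley_chain eps T x y.

Definition cont_within (g : R -> X) (T t : R) : Prop :=
  forall eps, 0 < eps -> exists delta, 0 < delta /\
    forall s, 0 <= s <= T -> Rabs (s - t) < delta -> d (g s) (g t) < eps.

Definition left_limit_exists (g : R -> X) (T p : R) : Prop :=
  exists L, forall eps, 0 < eps -> exists delta, 0 < delta /\
    forall s, 0 <= s <= T -> p - delta < s < p -> d (g s) L < eps.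

Definition right_limit_exists (g : R -> X) (T p : R) : Prop :=
  exists L, forall eps, 0 < eps -> exists delta, 0 < delta /\
    forall s, 0 <= s <= T -> p < s < p + delta -> d (g s) L < eps.

Definition piecewise_continuous (g : R -> X) (T : R) : Prop :=
  exists P : list R,
    (forall t, 0 <= t <= T -> ~ In t P -> cont_within g T t) /\
    (forall p, In p P -> 0 <= p <= T ->
       (0 < p -> left_limit_exists g T p) /\ (p < T -> right_limit_exists g T p)).

Definition eps_close (eps T : R) (g : R -> X) : Prop :=
  forall tau t, 0 <= tau <= 1 -> 0 <= t <= T - tau ->
    d (g (t + tau)) (F tau (g t)) < eps.

Definition shadow_chain (eps : R) (x y : X) : Prop :=
  exists (T : R) (g : R -> X),
    1 <= T /\ piecewise_continuous g T /\ g 0 = x /\ g T = y /\ eps_close eps T g.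

Definition shadow_succ (x y : X) : Prop :=
  forall eps, 0 < eps -> shadow_chain eps x y.

Definition is_fixed (x : X) : Prop := forall t, 0 <= t -> F t x = x.

Definition chain_recurrent (succ : X -> X -> Prop) (x : X) : Prop :=
  is_fixed x \/ exists y, succ x y /\ succ y x.

Definition mutually_equiv (succ : X -> X -> Prop) (M : X -> Prop) : Prop :=
  forall x y, M x -> M y -> succ x y /\ succ y x.

Definition is_node (succ : X -> X -> Prop) (M : X -> Prop) : Prop :=
  (forall x, M x -> chain_recurrent succ x) /\ mutually_equiv succ M /\
  (forall M' : X -> Prop, (forall x, M x -> M' x) ->
     (forall x, M' x -> chain_recurrent succ x) -> mutually_equiv succ M' ->
     forall x, M' x -> M x).

Definition graph_vertex (succ : X -> X -> Prop) (M : X -> Prop) : Prop :=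
  is_node succ M.

Definition graph_edge (succ : X -> X -> Prop) (M N : X -> Prop) : Prop :=
  is_node succ M /\ is_node succ N /\ exists x y, M x /\ N y /\ succ x y.

Definition nbhd (eps : R) (G : X -> Prop) : X -> Prop :=
  fun y => exists g, G g /\ d y g < eps.

Definition W_set (eps : R) (G : X -> Prop) : X -> Prop :=
  fun z => exists t y, 0 <= t /\ nbhd eps G y /\ z = F t y.

Definition attracts (G K : X -> Prop) : Prop :=
  forall eps, 0 < eps -> exists T, 0 < T /\
    forall t z, T <= t -> K z -> nbhd eps G (F t z).

Definition is_open (U : X -> Prop) : Prop :=
  forall x, U x -> exists r, 0 < r /\ forall y, d x y < r -> U y.

Definition is_compact (K : X -> Prop) : Prop :=
  forall (I : Type) (U : I -> X -> Prop), (forall i, is_open (U i)) ->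
    (forall x, K x -> exists i, U i x) ->
    exists l : list I, forall x, K x -> exists i, In i l /\ U i x.

Definition is_invariant (G : X -> Prop) : Prop :=
  forall t, 0 <= t ->
    (forall x, G x -> G (F t x)) /\ (forall y, G y -> exists x, G x /\ F t x = y).

Definition is_global_attractor (G : X -> Prop) : Prop :=
  is_compact G /\ is_invariant G /\
  (forall K, is_compact K -> attracts G K) /\
  (forall H, is_compact H -> is_invariant H -> forall x, H x -> G x).

Definition is_strong_global_attractor (G : X -> Prop) : Prop :=
  is_global_attractor G /\
  exists eps, 0 < eps /\ attracts G (nbhd eps G) /\
    forall e, 0 < e -> exists delta, 0 < delta /\
      forall t s z w, 0 <= t <= 1 -> 0 <= s <= 1 ->
        W_set eps G z -> W_set eps G w ->
        Rabs (t - s) < delta -> d z w < delta -> d (F t z) (F s w) < e.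

Definition strong_compact_dynamics : Prop :=
  exists G, is_strong_global_attractor G.

End Defs.

(* Everything happens near the global attractor [G], on a neighbourhood of which the flow
   is uniformly continuous over bounded times (strongness).  Conley-recurrent points lie in
   [G] because the late jumps of a Conley chain land near [G].  Shadow-recurrent points have
   arbitrarily fine discrete loops; such a loop follows the orbit of its base point until it
   is near [G] and then cannot leave the vicinity of [G], so these points lie in [G] too.
   From a point of [G], a Conley chain becomes a shadow chain by following the flow for each
   time [t_i] and then jumping.  Conversely, a shadow chain sampled at equal steps of length
   in [[1/2, 1]] is a discrete chain; preceded by a long fine loop, its steps can be grouped
   into blocks of duration between [T] and [2T + 1], and uniform continuity keeps the error
   of each block small, which yields a Conley chain.  So the two relations have the same
   recurrent points and agree between them, and nodes and graphs depend only on these. *)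

From Stdlib Require Import Reals List Lra Lia Classical ZArith.
Open Scope R_scope.

Lemma nat_above (r : R) : exists n : nat, r < INR n.
Proof.
  destruct (INR_archimed 1 r) as [n Hn]; [lra|].
  exists n. lra.
Qed.

Lemma real_induction (P : R -> Prop) (b : R) : 0 <= b ->
  (forall s, s < 0 -> P s) ->
  (forall s s', s' <= s -> P s -> P s') ->
  (forall s, 0 <= s <= b -> exists r, 0 < r /\ (P (s - r) -> P (s + r))) ->
  P b.
Proof.
  intros Hb Hneg Hdown Hstep.
  set (E := fun s => s <= b /\ P s).
  assert (HbE : bound E) by (exists b; intros s [Hs _]; exact Hs).
  assert (HnE : exists s, E s) by (exists (-1); split; [lra | apply Hneg; lra]).
  destruct (completeness E HbE HnE) as [m [Hub Hlub]].
  assert (Hmb : m <= b) by (apply Hlub; intros s [Hs _]; exact Hs).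
  destruct (Hstep (Rmax m 0)) as [r [Hr Hprop]].
  { split; [apply Rmax_r | apply Rmax_lub; lra]. }
  assert (Hlow : P (Rmax m 0 - r)).
  { destruct (Rle_lt_dec m 0) as [Hm0 | Hm0].
    - apply Hneg. rewrite Rmax_right by lra. lra.
    - rewrite Rmax_left by lra. apply NNPP. intro Hn.
      assert (Hup : is_upper_bound E (m - r)).
      { intros s [_ Ps]. destruct (Rle_lt_dec s (m - r)) as [h | h]; [exact h |].
        exfalso. apply Hn. apply (Hdown s); [lra | exact Ps]. }
      specialize (Hlub _ Hup). lra. }
  specialize (Hprop Hlow).
  destruct (Rle_lt_dec b (Rmax m 0 + r)) as [Hbr | Hbr].
  - exact (Hdown _ _ Hbr Hprop).
  - assert (Rmax m 0 + r <= m) by (apply Hub; split; [lra | exact Hprop]).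
    pose proof (Rmax_l m 0). lra.
Qed.

Fixpoint elapsed (h : nat -> R) (n : nat) : R :=
  match n with O => 0 | S m => elapsed h m + h m end.

Lemma elapsed_ext h1 h2 k :
  (forall j, (j < k)%nat -> h1 j = h2 j) -> elapsed h1 k = elapsed h2 k.
Proof.
  induction k as [|k IH]; intros E; simpl; [reflexivity |].
  rewrite IH by (intros; apply E; lia). rewrite E by lia. reflexivity.
Qed.

Definition splice {A : Type} (n : nat) (u v : nat -> A) (j : nat) : A :=
  if (j <? n)%nat then u j else v (j - n)%nat.

Lemma elapsed_splice n1 h1 h2 p :
  elapsed (splice n1 h1 h2) (n1 + p) = elapsed h1 n1 + elapsed h2 p.
Proof.
  induction p as [|p IH].
  - rewrite Nat.add_0_r, Rplus_0_r. apply elapsed_ext. intros j Hj.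
    unfold splice. destruct (Nat.ltb_spec j n1); [reflexivity | lia].
  - rewrite Nat.add_succ_r. simpl. rewrite IH. unfold splice.
    destruct (Nat.ltb_spec (n1 + p) n1); [lia |].
    replace (n1 + p - n1)%nat with p by lia. ring.
Qed.

Section ElapsedBounds.
Context {h : nat -> R} {n : nat}.
Hypothesis Hh : forall j, (j < n)%nat -> 1/2 <= h j <= 1.

Lemma elapsed_diff_ge m p :
  (m + p <= n)%nat -> INR p <= 2 * (elapsed h (m + p) - elapsed h m).
Proof.
  induction p as [|p IH]; intros Hmp.
  - rewrite Nat.add_0_r. simpl. lra.
  - rewrite Nat.add_succ_r, S_INR. simpl.
    specialize (IH ltac:(lia)). destruct (Hh (m + p) ltac:(lia)). lra.
Qed.

Lemma elapsed_ge k : (k <= n)%nat -> INR k <= 2 * elapsed h k.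
Proof. intros Hk. pose proof (elapsed_diff_ge 0 k Hk). simpl in *. lra. Qed.

Lemma elapsed_first_crossing T i k : 0 < T -> (i <= k <= n)%nat ->
  T <= elapsed h k - elapsed h i ->
  exists m, (i < m <= k)%nat /\ T <= elapsed h m - elapsed h i <= T + 1.
Proof.
  intros HT. induction k as [|k IH]; intros Hik Hk.
  - replace i with 0%nat in Hk by lia. simpl in Hk. lra.
  - destruct (Nat.eq_dec i (S k)) as [-> | Hi]; [lra |].
    destruct (Rle_lt_dec T (elapsed h k - elapsed h i)) as [H1 | H1].
    + destruct (IH ltac:(lia) H1) as [m [Hm1 Hm2]]. exists m. split; [lia | exact Hm2].
    + exists (S k). split; [lia |]. simpl in *. destruct (Hh k ltac:(lia)). lra.
Qed.

Lemma elapsed_last_crossing T i k : 0 < T -> (i <= k <= n)%nat ->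
  T <= elapsed h k - elapsed h i ->
  exists m, (i <= m < k)%nat /\ T <= elapsed h k - elapsed h m <= T + 1.
Proof.
  intros HT Hik. replace i with (k - (k - i))%nat by lia.
  assert (Hkn : (k <= n)%nat) by lia.
  assert (Hp : (k - i <= k)%nat) by lia. revert Hp. generalize (k - i)%nat. clear i Hik.
  intros p. induction p as [|p IH]; intros Hp Hk.
  - rewrite Nat.sub_0_r in Hk. lra.
  - destruct (Rle_lt_dec T (elapsed h k - elapsed h (k - p))) as [H1 | H1].
    + destruct (IH ltac:(lia) H1) as [m [Hm1 Hm2]]. exists m. split; [lia | exact Hm2].
    + exists (k - S p)%nat. split; [lia |]. split; [exact Hk |].
      replace (k - p)%nat with (S (k - S p)) in H1 by lia. simpl in H1.
      destruct (Hh (k - S p) ltac:(lia)). lra.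
Qed.

End ElapsedBounds.

Section Metric.
Context {X : Type} {d : X -> X -> R}.
Hypothesis Hd : is_metric d.

Lemma dist_nonneg x y : 0 <= d x y.
Proof. apply Hd. Qed.

Lemma dist_refl x : d x x = 0.
Proof. apply Hd. reflexivity. Qed.

Lemma dist_sym x y : d x y = d y x.
Proof. apply Hd. Qed.

Lemma dist_triangle x y z : d x z <= d x y + d y z.
Proof. apply Hd. Qed.

Lemma nbhd_of_mem (K : X -> Prop) e x : 0 < e -> K x -> nbhd d e K x.
Proof. intros He Kx. exists x. rewrite dist_refl. auto. Qed.

Lemma nbhd_weaken (K : X -> Prop) e e' x : e <= e' -> nbhd d e K x -> nbhd d e' K x.
Proof. intros He [g [Kg Hg]]. exists g. split; [exact Kg | lra]. Qed.

Lemma nbhd_triangle (K : X -> Prop) a b s r :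
  d a b < r -> nbhd d s K a -> nbhd d (s + r) K b.
Proof.
  intros Hab [g [Kg Hg]]. exists g. split; [exact Kg |].
  pose proof (dist_triangle b a g). rewrite (dist_sym b a) in *. lra.
Qed.

Lemma compact_singleton x : is_compact d (fun z => z = x).
Proof.
  intros I U _ Hcov. destruct (Hcov x eq_refl) as [i Hi].
  exists (i :: nil). intros z ->. exists i. split; [left |]; auto.
Qed.

Lemma compact_closed (K : X -> Prop) x :
  is_compact d K -> (forall e, 0 < e -> nbhd d e K x) -> K x.
Proof.
  intros HK Hadh. apply NNPP. intro Hx.
  set (U := fun (n : nat) z => / INR (S n) < d z x).
  destruct (HK nat U) as [l Hl].
  - intros n z Hz. exists (d z x - / INR (S n)). split; [unfold U in Hz; lra |].
    intros y Hy. unfold U in *. pose proof (dist_triangle z y x). lra.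
  - intros z Kz.
    assert (Hpos : 0 < d z x).
    { destruct (Rle_lt_or_eq_dec _ _ (dist_nonneg z x)) as [h | h]; [exact h |].
      exfalso. apply Hx. replace x with z; [exact Kz | apply Hd; auto]. }
    destruct (archimed_cor1 _ Hpos) as [[|n] [Hn Hn0]]; [lia |].
    exists n. exact Hn.
  - set (N := fold_right max 0%nat l).
    assert (HN : forall i, In i l -> (i <= N)%nat).
    { unfold N. clear. induction l as [|a l IH]; simpl; intros i Hi; [contradiction |].
      destruct Hi as [<- | Hi]; [lia |]. specialize (IH i Hi). lia. }
    assert (Hp : 0 < / INR (S N)) by (apply Rinv_0_lt_compat, lt_0_INR; lia).
    destruct (Hadh _ Hp) as [g [Kg Hg]].
    destruct (Hl g Kg) as [i [Hi Hui]]. unfold U in Hui.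
    assert (/ INR (S N) <= / INR (S i))
      by (apply Rinv_le_contravar; [apply lt_0_INR; lia | apply le_INR; specialize (HN i Hi); lia]).
    rewrite dist_sym in Hg. lra.
Qed.

Lemma cont_within_limits (g : R -> X) T p :
  cont_within d g T p -> left_limit_exists d g T p /\ right_limit_exists d g T p.
Proof.
  intros Hc. split; exists (g p); intros eps Heps; destruct (Hc eps Heps) as [r [Hr H]];
    exists r; split; auto; intros s Hs Hsp; apply H; auto; apply Rabs_def1; lra.
Qed.

Lemma piecewise_continuous_right_limit_0 (g : R -> X) b :
  piecewise_continuous d g b -> 0 < b -> right_limit_exists d g b 0.
Proof.
  intros [P [Hc Hl]] Hb. destruct (classic (In 0 P)) as [Hin | Hin].
  - apply (Hl 0 Hin); lra.
  - apply cont_within_limits, Hc; auto. lra.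
Qed.

Definition glue_curves (g1 g2 : R -> X) (a : R) (s : R) : X :=
  if Rlt_dec s a then g1 s else g2 (s - a).

Section Glue.
Variables (g1 g2 : R -> X) (a b : R).
Hypothesis Ha : 0 < a.
Hypothesis Hg1 : forall t, 0 <= t <= a -> cont_within d g1 a t.
Hypothesis Hg2 : piecewise_continuous d g2 b.

Let g := glue_curves g1 g2 a.

Lemma glue_cont_within_lower t : 0 <= t < a -> cont_within d g (a + b) t.
Proof.
  intros Ht eps Heps. destruct (Hg1 t ltac:(lra) eps Heps) as [r [Hr H]].
  exists (Rmin r (a - t)). split; [apply Rmin_glb_lt; lra |].
  intros s Hs Hst. pose proof (Rmin_l r (a - t)). pose proof (Rmin_r r (a - t)).
  apply Rabs_def2 in Hst. unfold g, glue_curves.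
  destruct (Rlt_dec s a); [| lra]. destruct (Rlt_dec t a); [| lra].
  apply H; [lra | apply Rabs_def1; lra].
Qed.

Lemma glue_cont_within_upper t : a < t <= a + b -> cont_within d g2 b (t - a) ->
  cont_within d g (a + b) t.
Proof.
  intros Ht Hc eps Heps. destruct (Hc eps Heps) as [r [Hr H]].
  exists (Rmin r (t - a)). split; [apply Rmin_glb_lt; lra |].
  intros s Hs Hst. pose proof (Rmin_l r (t - a)). pose proof (Rmin_r r (t - a)).
  apply Rabs_def2 in Hst. unfold g, glue_curves.
  destruct (Rlt_dec s a); [lra |]. destruct (Rlt_dec t a); [lra |].
  apply H; [lra | apply Rabs_def1; lra].
Qed.

Lemma glue_left_limit_upper p : a < p -> left_limit_exists d g2 b (p - a) ->
  left_limit_exists d g (a + b) p.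
Proof.
  intros Hp [L HL]. exists L. intros eps Heps. destruct (HL eps Heps) as [r [Hr H]].
  exists (Rmin r (p - a)). split; [apply Rmin_glb_lt; lra |].
  intros s Hs Hsp. pose proof (Rmin_l r (p - a)). pose proof (Rmin_r r (p - a)).
  unfold g, glue_curves. destruct (Rlt_dec s a); [lra |]. apply H; lra.
Qed.

Lemma glue_right_limit_upper p : a <= p -> right_limit_exists d g2 b (p - a) ->
  right_limit_exists d g (a + b) p.
Proof.
  intros Hp [L HL]. exists L. intros eps Heps. destruct (HL eps Heps) as [r [Hr H]].
  exists r. split; [exact Hr |].
  intros s Hs Hsp. unfold g, glue_curves. destruct (Rlt_dec s a); [lra |]. apply H; lra.
Qed.

Lemma glue_left_limit_a : left_limit_exists d g (a + b) a.
Proof.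
  destruct (cont_within_limits g1 a a (Hg1 a ltac:(lra))) as [[L HL] _]. exists L.
  intros eps Heps. destruct (HL eps Heps) as [r [Hr H]]. exists r. split; [exact Hr |].
  intros s Hs Hsp. unfold g, glue_curves. destruct (Rlt_dec s a); [| lra]. apply H; lra.
Qed.

Lemma piecewise_continuous_glue : piecewise_continuous d g (a + b).
Proof.
  pose proof Hg2 as [P [Hc2 Hl2]].
  exists (a :: map (fun p => p + a) P). split.
  - intros t Ht Hnin.
    destruct (Rtotal_order t a) as [Hlt | [Heq | Hgt]].
    + apply glue_cont_within_lower. lra.
    + exfalso. apply Hnin. left. auto.
    + apply glue_cont_within_upper; [lra |]. apply Hc2; [lra |].
      intro Hin. apply Hnin. right. replace t with (t - a + a) by ring.
      apply (in_map (fun p => p + a)). exact Hin.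
  - intros p Hin Hp.
    destruct (Rtotal_order p a) as [Hlt | [-> | Hgt]].
    + destruct (cont_within_limits g (a + b) p) as [HL HR];
        [apply glue_cont_within_lower; lra | split; intros _; assumption].
    + split; intros Hab; [apply glue_left_limit_a |].
      apply glue_right_limit_upper; [lra |]. rewrite Rminus_diag.
      apply piecewise_continuous_right_limit_0; [exact Hg2 | lra].
    + destruct Hin as [Hin | Hin]; [lra |].
      apply in_map_iff in Hin. destruct Hin as [q [<- Hin]].
      destruct (Hl2 q Hin ltac:(lra)) as [HL HR].
      split; intros Hq.
      * apply glue_left_limit_upper; [lra |]. replace (q + a - a) with q by ring. apply HL. lra.
      * apply glue_right_limit_upper; [lra |]. replace (q + a - a) with q by ring. apply HR. lra.
Qed.

End Glue.

End Metric.

Section ChainNotions.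
Context {X : Type} (d : X -> X -> R) (F : R -> X -> X).

Definition step_chain (eta : R) (a b : X) (n : nat) (z : nat -> X) (h : nat -> R) : Prop :=
  z 0%nat = a /\ z n = b /\
  forall j, (j < n)%nat -> 1/2 <= h j <= 1 /\ d (F (h j) (z j)) (z (S j)) < eta.

Definition fine_loops (x : X) : Prop :=
  forall eta, 0 < eta -> exists n z h, step_chain eta x x n z h /\ (1 <= n)%nat.

(* Following the orbit of [a] up to time [min 1 L] is what keeps the curve [eps]-close
   when a flow segment is glued in front of it. *)
Definition shadow_curve (eps L : R) (g : R -> X) (a y : X) : Prop :=
  0 <= L /\ g 0 = a /\ g L = y /\ piecewise_continuous d g L /\ eps_close d F eps L g /\
  (forall r, 0 <= r <= 1 -> r <= L -> g r = F r a).

End ChainNotions.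

Section Semiflow.
Context {X : Type} {d : X -> X -> R} {F : R -> X -> X}.
Hypothesis Hd : is_metric d.
Hypothesis HF : is_semiflow d F.

Lemma flow_zero x : F 0 x = x.
Proof. apply HF. Qed.

Lemma flow_add t s x : 0 <= t -> 0 <= s -> F (t + s) x = F t (F s x).
Proof. apply HF. Qed.

Lemma flow_continuous t0 x0 : 0 <= t0 -> forall eps, 0 < eps -> exists r, 0 < r /\
  forall t x, 0 <= t -> Rabs (t - t0) < r -> d x x0 < r -> d (F t x) (F t0 x0) < eps.
Proof. apply HF. Qed.

Lemma orbit_cont_within x a t : 0 <= t <= a -> cont_within d (fun s => F s x) a t.
Proof.
  intros Ht eps Heps. destruct (flow_continuous t x ltac:(lra) eps Heps) as [r [Hr H]].
  exists r. split; [exact Hr |]. intros s Hs Hst. apply H; [lra | exact Hst |].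
  rewrite (dist_refl Hd); auto.
Qed.

Lemma flow_equicontinuous_at p e : 0 < e -> exists r, 0 < r /\
  forall t, 0 <= t <= 1 -> forall z, d z p < r -> d (F t z) (F t p) < e.
Proof.
  intros He.
  set (P := fun s => exists r, 0 < r /\
    forall t, 0 <= t <= s -> forall z, d z p < r -> d (F t z) (F t p) < e).
  assert (P1 : P 1); [apply real_induction; [lra | | |] | destruct P1 as [r [Hr H]]; eauto].
  - intros s Hs. exists 1. split; [lra |]. intros. lra.
  - intros s s' Hss [r [Hr H]]. exists r. split; [exact Hr |]. intros. apply H; auto; lra.
  - intros s0 Hs0. destruct (flow_continuous s0 p ltac:(lra) (e/2) ltac:(lra)) as [r1 [Hr1 H1]].
    exists (r1/2). split; [lra |]. intros [r2 [Hr2 H2]].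
    exists (Rmin r1 r2). split; [apply Rmin_glb_lt; auto |].
    intros t Ht z Hz. pose proof (Rmin_l r1 r2). pose proof (Rmin_r r1 r2).
    destruct (Rle_lt_dec t (s0 - r1/2)) as [Hts | Hts]; [apply H2; lra |].
    assert (Hts0 : Rabs (t - s0) < r1) by (apply Rabs_def1; lra).
    pose proof (H1 t z ltac:(lra) Hts0 ltac:(lra)).
    pose proof (H1 t p ltac:(lra) Hts0 ltac:(rewrite (dist_refl Hd); lra)).
    pose proof (dist_triangle Hd (F t z) (F s0 p) (F t p)) as Htri.
    rewrite (dist_sym Hd (F s0 p)) in Htri. lra.
Qed.

Lemma flow_equicontinuous_along_orbit x M e : 0 <= M -> 0 < e -> exists r, 0 < r /\
  forall s, 0 <= s <= M -> forall t, 0 <= t <= 1 -> forall z,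
    d z (F s x) < r -> d (F t z) (F t (F s x)) < e.
Proof.
  intros HM He.
  set (P := fun s1 => exists r, 0 < r /\ forall s, 0 <= s <= s1 -> forall t, 0 <= t <= 1 ->
    forall z, d z (F s x) < r -> d (F t z) (F t (F s x)) < e).
  assert (PM : P M); [apply real_induction; [exact HM | | |] | destruct PM as [r [Hr H]]; eauto].
  - intros s Hs. exists 1. split; [lra |]. intros. lra.
  - intros s s' Hss [r [Hr H]]. exists r. split; [exact Hr |]. intros. apply H; auto; lra.
  - intros s0 Hs0. destruct (flow_equicontinuous_at (F s0 x) (e/2) ltac:(lra)) as [rq [Hrq Hq]].
    destruct (flow_continuous s0 x ltac:(lra) (rq/2) ltac:(lra)) as [r1 [Hr1 H1]].
    exists (r1/2). split; [lra |]. intros [r2 [Hr2 H2]].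
    exists (Rmin r2 (rq/2)). split; [apply Rmin_glb_lt; lra |].
    intros s Hs t Ht z Hz. pose proof (Rmin_l r2 (rq/2)). pose proof (Rmin_r r2 (rq/2)).
    destruct (Rle_lt_dec s (s0 - r1/2)) as [Hss | Hss]; [apply H2; auto; lra |].
    assert (Hss0 : Rabs (s - s0) < r1) by (apply Rabs_def1; lra).
    pose proof (H1 s x ltac:(lra) Hss0 ltac:(rewrite (dist_refl Hd); lra)).
    pose proof (dist_triangle Hd z (F s x) (F s0 x)).
    pose proof (Hq t Ht z ltac:(lra)). pose proof (Hq t Ht (F s x) ltac:(lra)).
    pose proof (dist_triangle Hd (F t z) (F t (F s0 x)) (F t (F s x))) as Htri.
    rewrite (dist_sym Hd (F t (F s0 x))) in Htri. lra.
Qed.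

Lemma step_chain_times {eta a b n z h} : step_chain d F eta a b n z h ->
  forall j, (j < n)%nat -> 1/2 <= h j <= 1.
Proof. intros [_ [_ Hst]] j Hj. apply Hst, Hj. Qed.

Lemma step_chain_weaken {eta eta' a b n z h} : eta <= eta' ->
  step_chain d F eta a b n z h -> step_chain d F eta' a b n z h.
Proof.
  intros Hle [Z0 [Zn Hst]]. split; [exact Z0 |]. split; [exact Zn |].
  intros j Hj. destruct (Hst j Hj). split; [assumption | lra].
Qed.

Lemma step_chain_app {eta a b c n1 z1 h1 n2 z2 h2} :
  step_chain d F eta a b n1 z1 h1 -> step_chain d F eta b c n2 z2 h2 ->
  step_chain d F eta a c (n1 + n2) (splice n1 z1 z2) (splice n1 h1 h2).
Proof.
  intros [A0 [An Ast]] [B0 [Bn Bst]]. unfold splice. split; [|split].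
  - destruct (Nat.ltb_spec 0 n1); [exact A0 |].
    replace n1 with 0%nat in * by lia. simpl. congruence.
  - destruct (Nat.ltb_spec (n1 + n2) n1); [lia |].
    replace (n1 + n2 - n1)%nat with n2 by lia. exact Bn.
  - intros j Hj. destruct (Nat.ltb_spec j n1); destruct (Nat.ltb_spec (S j) n1).
    + apply Ast. lia.
    + replace (S j - n1)%nat with 0%nat by lia. rewrite B0, <- An.
      assert (E : n1 = S j) by lia. rewrite E. apply Ast. lia.
    + lia.
    + replace (S j - n1)%nat with (S (j - n1)) by lia. apply Bst. lia.
Qed.

Lemma step_chain_drop {eta a b n z h} m : step_chain d F eta a b n z h -> (m <= n)%nat ->
  step_chain d F eta (z m) b (n - m) (fun j => z (m + j)%nat) (fun j => h (m + j)%nat).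
Proof.
  intros [_ [Zn Hst]] Hm. split; [rewrite Nat.add_0_r; reflexivity |]. split.
  - replace (m + (n - m))%nat with n by lia. exact Zn.
  - intros j Hj. rewrite Nat.add_succ_r. apply Hst. lia.
Qed.

(* Sampling a shadow chain of duration [L] at [n = ceil L] equally spaced times
   gives steps of length [L / n] in [[1/2, 1]]. *)
Lemma shadow_chain_discretize eta x y : shadow_chain d F eta x y ->
  exists n z h, step_chain d F eta x y n z h /\ (1 <= n)%nat.
Proof.
  intros [L [g [HL [_ [G0 [GL Hcl]]]]]].
  destruct (archimed L) as [A1 A2].
  assert (Hup : (0 <= up L)%Z) by (apply le_IZR; simpl; lra).
  set (n := Z.to_nat (up L)).
  assert (Hn : INR n = IZR (up L)) by (unfold n; rewrite INR_IZR_INZ, Z2Nat.id; auto).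
  set (tau := L / INR n).
  assert (Htau : 1/2 <= tau <= 1)
    by (unfold tau; split; apply Rmult_le_reg_r with (INR n); try lra; field_simplify; lra).
  assert (HL' : L = INR n * tau) by (unfold tau; field; lra).
  exists n, (fun j => g (INR j * tau)), (fun _ => tau). split; [split; [|split] |].
  - simpl. rewrite Rmult_0_l. exact G0.
  - rewrite <- HL'. exact GL.
  - intros j Hj. split; [exact Htau |]. rewrite S_INR, Rmult_plus_distr_r, Rmult_1_l.
    rewrite (dist_sym Hd). apply Hcl; [lra |].
    pose proof (pos_INR j). assert (INR (S j) <= INR n) by (apply le_INR; lia).
    rewrite S_INR in *. split; nra.
  - assert (Hn1 : 1 <= INR n) by lra. destruct n as [|n']; [simpl in Hn1; lra | lia].
Qed.

Lemma fine_loops_long x : fine_loops d F x -> forall eta, 0 < eta -> forall k : nat,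
  exists n z h, step_chain d F eta x x n z h /\ INR k / 2 <= elapsed h n.
Proof.
  intros Hl eta Heta. induction k as [|k IH].
  - exists 0%nat, (fun _ => x), (fun _ => 1). split; [split; [|split] |]; simpl; auto.
    + intros; lia.
    + lra.
  - destruct IH as [n1 [z1 [h1 [HD1 Hk]]]].
    destruct (Hl eta Heta) as [n2 [z2 [h2 [HD2 Hn2]]]].
    exists (n1 + n2)%nat, (splice n1 z1 z2), (splice n1 h1 h2).
    split; [apply (step_chain_app HD1 HD2) |].
    rewrite elapsed_splice.
    pose proof (elapsed_ge (step_chain_times HD2) n2 (le_n _)).
    pose proof (le_INR _ _ Hn2). rewrite S_INR. simpl in *. lra.
Qed.

Lemma shadow_recurrent_fine_loops x :
  chain_recurrent F (shadow_succ d F) x -> fine_loops d F x.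
Proof.
  intros [Hfix | [y [Hxy Hyx]]] eta Heta.
  - exists 1%nat, (fun _ => x), (fun _ => 1). split; [split; [|split] |]; auto.
    intros j Hj. split; [lra |]. rewrite Hfix, (dist_refl Hd) by lra. exact Heta.
  - destruct (shadow_chain_discretize _ _ _ (Hxy eta Heta)) as [n1 [z1 [h1 [HD1 Hn1]]]].
    destruct (shadow_chain_discretize _ _ _ (Hyx eta Heta)) as [n2 [z2 [h2 [HD2 _]]]].
    exists (n1 + n2)%nat, (splice n1 z1 z2), (splice n1 h1 h2).
    split; [apply (step_chain_app HD1 HD2) | lia].
Qed.

(* Each jump, transported by the flow for the remaining time, costs at most [omega]. *)
Lemma step_chain_telescope (U : X -> Prop) eta omega B a b n z h :
  (forall u t, U u -> 0 <= t -> U (F t u)) -> eta <= omega ->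
  (forall u v, U u -> U v -> d u v < eta -> forall t, 0 <= t <= B -> d (F t u) (F t v) < omega) ->
  step_chain d F eta a b n z h ->
  forall p m, (m + p <= n)%nat -> (forall j, (m <= j < m + p)%nat -> U (z j)) ->
  elapsed h (m + p) - elapsed h m <= B ->
  d (z (m + p)%nat) (F (elapsed h (m + p) - elapsed h m) (z m)) <= INR p * omega.
Proof.
  intros HUfwd Hom HUC HD. pose proof HD as [_ [_ Hst]].
  pose proof (elapsed_diff_ge (step_chain_times HD)) as Hlb.
  induction p as [|p IH]; intros m Hmp HU HB.
  - rewrite Nat.add_0_r, Rminus_diag, flow_zero, (dist_refl Hd). simpl. lra.
  - rewrite Nat.add_succ_r in *. destruct (Hst m ltac:(lia)) as [[Hh1 Hh2] Hjump].
    set (s := elapsed h (S (m + p)) - elapsed h (S m)).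
    pose proof (Hlb (S m) p ltac:(lia)) as Hs. cbn [Nat.add] in Hs. fold s in Hs.
    pose proof (pos_INR p).
    assert (E : elapsed h (S (m + p)) - elapsed h m = s + h m) by (unfold s; simpl; ring).
    rewrite E in HB |- *. rewrite flow_add by lra.
    specialize (IH (S m) ltac:(lia) ltac:(intros j Hj; apply HU; lia)).
    cbn [Nat.add] in IH. fold s in IH. specialize (IH ltac:(lra)).
    assert (Hstep : d (F s (z (S m))) (F s (F (h m) (z m))) <= omega).
    { destruct (Rle_lt_dec s 0) as [Hs0 | Hs0].
      - replace s with 0 by lra. rewrite !flow_zero, (dist_sym Hd). lra.
      - assert (Hp : (0 < p)%nat)
          by (destruct p; [unfold s in Hs0; rewrite Nat.add_0_r in Hs0; lra | lia]).
        left. apply HUC; [apply HU; lia | apply HUfwd; [apply HU; lia | lra] | | lra].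
        rewrite (dist_sym Hd). exact Hjump. }
    pose proof (dist_triangle Hd (z (S (m + p))) (F s (z (S m))) (F s (F (h m) (z m)))).
    rewrite S_INR. lra.
Qed.

Lemma step_chain_tracks_orbit x M k e : 0 <= M -> 0 < e -> exists eta, 0 < eta /\
  forall b n z h, step_chain d F eta x b n z h ->
  forall j, (j <= k)%nat -> (j <= n)%nat -> elapsed h j <= M ->
  d (z j) (F (elapsed h j) x) < e.
Proof.
  intros HM. revert e. induction k as [|k IH]; intros e He.
  - exists 1. split; [lra |]. intros b n z h [Z0 _] j Hj _ _.
    replace j with 0%nat by lia. simpl. rewrite flow_zero, Z0, (dist_refl Hd). exact He.
  - destruct (flow_equicontinuous_along_orbit x M (e/2) HM ltac:(lra)) as [r [Hr Horb]].
    destruct (IH (Rmin e r) ltac:(apply Rmin_glb_lt; lra)) as [eta [Heta Htr]].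
    exists (Rmin eta (e/2)). split; [apply Rmin_glb_lt; lra |].
    intros b n z h HD j Hj Hjn HjM.
    pose proof (Rmin_l e r). pose proof (Rmin_r e r).
    pose proof (Rmin_l eta (e/2)). pose proof (Rmin_r eta (e/2)).
    pose proof (step_chain_weaken (Rmin_l eta (e/2)) HD) as HDeta.
    destruct (Nat.eq_dec j (S k)) as [-> | Hjk];
      [| pose proof (Htr b n z h HDeta j ltac:(lia) Hjn HjM); lra].
    pose proof HD as [_ [_ Hst]]. destruct (Hst k ltac:(lia)) as [[Hh1 Hh2] Hjump].
    pose proof (elapsed_ge (step_chain_times HD) k ltac:(lia)).
    pose proof (pos_INR k). simpl in HjM |- *.
    specialize (Htr b n z h HDeta k ltac:(lia) ltac:(lia) ltac:(lra)).
    pose proof (Horb (elapsed h k) ltac:(lra) (h k) ltac:(lra) (z k) ltac:(lra)).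
    rewrite Rplus_comm, flow_add by lra.
    pose proof (dist_triangle Hd (z (S k)) (F (h k) (z k)) (F (h k) (F (elapsed h k) x))) as Htri.
    rewrite (dist_sym Hd (z (S k)) (F (h k) (z k))) in Htri. lra.
Qed.

Lemma conley_chain_single eps T a b t : T <= t -> d (F t a) b < eps ->
  conley_chain d F eps T a b.
Proof.
  intros Ht Hab. exists 1%nat, (fun i => match i with O => a | _ => b end), (fun _ => t).
  split; [lia |]. split; [reflexivity |]. split; [reflexivity |].
  intros i Hi. replace i with 0%nat by lia. auto.
Qed.

Lemma conley_chain_cons eps T a b c t : T <= t -> d (F t a) b < eps ->
  conley_chain d F eps T b c -> conley_chain d F eps T a c.
Proof.
  intros Ht Hab [N [xs [ts [HN [H0 [HNc Hst]]]]]].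
  exists (S N), (fun i => match i with O => a | S i => xs i end),
    (fun i => match i with O => t | S i => ts i end).
  split; [lia |]. split; [reflexivity |]. split; [exact HNc |].
  intros [|i] Hi; [rewrite H0; auto | apply Hst; lia].
Qed.

(* Cut the time line into blocks of duration between [T] and [2T + 1]. *)
Lemma conley_chain_of_blocks eps T n z h : 0 < T ->
  (forall j, (j < n)%nat -> 1/2 <= h j <= 1) ->
  (forall i k, (i <= k <= n)%nat -> elapsed h k - elapsed h i <= 2 * T + 1 ->
     d (F (elapsed h k - elapsed h i) (z i)) (z k) < eps) ->
  T <= elapsed h n -> conley_chain d F eps T (z 0%nat) (z n).
Proof.
  intros HT Hh Hblock Hn.
  enough (Hq : forall q i, (i + q = n)%nat -> T <= elapsed h n - elapsed h i ->
            conley_chain d F eps T (z i) (z n)) by (apply (Hq n); [lia | simpl; lra]).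
  intro q. induction q as [q IH] using Wf_nat.lt_wf_ind. intros i Hiq HTi.
  destruct (Rlt_le_dec (elapsed h n - elapsed h i) (2 * T + 1)) as [Hshort | Hlong].
  - apply (conley_chain_single _ _ _ _ (elapsed h n - elapsed h i)); [exact HTi |].
    apply Hblock; [lia | lra].
  - destruct (elapsed_first_crossing Hh T i n HT ltac:(lia) HTi) as [m [Hm [HmT HmT1]]].
    apply (conley_chain_cons _ _ _ (z m) _ (elapsed h m - elapsed h i)); [exact HmT | |].
    + apply Hblock; [lia | lra].
    + apply (IH (n - m)%nat); [lia | lia | lra].
Qed.

Lemma shadow_curve_point eps y : 0 < eps -> shadow_curve d F eps 0 (fun _ => y) y y.
Proof.
  intros Heps. split; [lra |]. do 2 (split; [reflexivity |]). split; [|split].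
  - exists nil. split; [| intros p []].
    intros t _ _ e He. exists 1. split; [lra |]. intros. rewrite (dist_refl Hd). exact He.
  - intros tau t Htau Ht. replace tau with 0 by lra. rewrite flow_zero, (dist_refl Hd). exact Heps.
  - intros r Hr HrL. replace r with 0 by lra. rewrite flow_zero. reflexivity.
Qed.

Lemma shadow_curve_prepend eps t a b y L g : 1 < t ->
  (forall s, 0 <= s <= 1 -> d (F s b) (F s (F t a)) < eps) ->
  shadow_curve d F eps L g b y ->
  shadow_curve d F eps (t + L) (glue_curves (fun s => F s a) g t) a y.
Proof.
  intros Ht Hjump [HL [Hg0 [HgL [Hpc [Hcl Hfl]]]]]. unfold glue_curves.
  split; [lra |]. split; [|split; [|split; [|split]]].
  - destruct (Rlt_dec 0 t); [apply flow_zero | lra].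
  - destruct (Rlt_dec (t + L) t); [lra |]. replace (t + L - t) with L by ring. exact HgL.
  - apply (piecewise_continuous_glue _ _ t L ltac:(lra)); [| exact Hpc].
    intros s Hs. apply orbit_cont_within. exact Hs.
  - intros tau s Htau Hs.
    destruct (Rlt_dec (s + tau) t) as [H1 | H1]; destruct (Rlt_dec s t) as [H2 | H2]; [| lra | |].
    + rewrite <- flow_add, Rplus_comm, (dist_refl Hd) by lra.
      pose proof (Hjump 0 ltac:(lra)). pose proof (dist_nonneg Hd (F 0 b) (F 0 (F t a))). lra.
    + rewrite Hfl by lra.
      replace (F tau (F s a)) with (F (s + tau - t) (F t a))
        by (rewrite <- !flow_add by lra; f_equal; ring).
      apply Hjump. lra.
    + replace (s + tau - t) with ((s - t) + tau) by ring. apply Hcl; lra.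
  - intros r Hr HrL. destruct (Rlt_dec r t); [reflexivity | lra].
Qed.

End Semiflow.

Section TransferNodes.
Context {X : Type} (F : R -> X -> X).

Definition same_chain_structure (s1 s2 : X -> X -> Prop) : Prop :=
  (forall x, chain_recurrent F s1 x <-> chain_recurrent F s2 x) /\
  (forall x y, chain_recurrent F s1 x -> chain_recurrent F s1 y -> (s1 x y <-> s2 x y)).

Lemma same_chain_structure_sym s1 s2 :
  same_chain_structure s1 s2 -> same_chain_structure s2 s1.
Proof.
  intros [Hrec Hsucc]. split; [intro x; symmetry; apply Hrec |].
  intros x y Hx Hy. symmetry. apply Hsucc; apply Hrec; assumption.
Qed.

Lemma mutually_equiv_transfer s1 s2 (M : X -> Prop) : same_chain_structure s1 s2 ->
  (forall x, M x -> chain_recurrent F s1 x) -> mutually_equiv s1 M -> mutually_equiv s2 M.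
Proof.
  intros [_ Hsucc] HM Heq x y Hx Hy. destruct (Heq x y Hx Hy).
  split; apply Hsucc; auto.
Qed.

Lemma is_node_transfer s1 s2 (M : X -> Prop) : same_chain_structure s1 s2 ->
  is_node F s1 M -> is_node F s2 M.
Proof.
  intros Hs [HR [HE Hmax]]. pose proof Hs as [Hrec _].
  split; [intros x Hx; apply Hrec, HR, Hx |].
  split; [exact (mutually_equiv_transfer _ _ _ Hs HR HE) |].
  intros M' Hsub HR' HE'. apply Hmax; [exact Hsub | intros x Hx; apply Hrec, HR', Hx |].
  exact (mutually_equiv_transfer _ _ _ (same_chain_structure_sym _ _ Hs) HR' HE').
Qed.

Lemma graph_edge_transfer s1 s2 (M N : X -> Prop) : same_chain_structure s1 s2 ->
  graph_edge F s1 M N -> graph_edge F s2 M N.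
Proof.
  intros Hs [HM [HN [x [y [Hx [Hy Hxy]]]]]].
  split; [exact (is_node_transfer _ _ _ Hs HM) |].
  split; [exact (is_node_transfer _ _ _ Hs HN) |].
  exists x, y. split; [exact Hx |]. split; [exact Hy |].
  apply (proj2 Hs); [apply (proj1 HM) | apply (proj1 HN) |]; assumption.
Qed.

End TransferNodes.

Section Attractor.
Context {X : Type} {d : X -> X -> R} {F : R -> X -> X} {G : X -> Prop} {e0 : R}.
Hypothesis Hd : is_metric d.
Hypothesis HF : is_semiflow d F.
Hypothesis HG : is_global_attractor d F G.
Hypothesis He0 : 0 < e0.
Hypothesis Hattr : attracts d F G (nbhd d e0 G).
Hypothesis Hunif : forall e, 0 < e -> exists delta, 0 < delta /\
  forall t s z w, 0 <= t <= 1 -> 0 <= s <= 1 ->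
    W_set d F e0 G z -> W_set d F e0 G w ->
    Rabs (t - s) < delta -> d z w < delta -> d (F t z) (F s w) < e.

Notation W := (W_set d F e0 G).

Lemma W_of_nbhd x : nbhd d e0 G x -> W x.
Proof.
  intros Hx. exists 0, x. split; [lra |]. split; [exact Hx | symmetry; apply (flow_zero HF)].
Qed.

Lemma W_forward a t : W a -> 0 <= t -> W (F t a).
Proof.
  intros [s [y [Hs [Hy ->]]]] Ht. exists (t + s), y. split; [lra |]. split; [exact Hy |].
  symmetry. apply (flow_add HF); assumption.
Qed.

Lemma attractor_forward x t : G x -> 0 <= t -> G (F t x).
Proof. intros Hx Ht. apply (proj1 (proj1 (proj2 HG) t Ht)), Hx. Qed.

Lemma flow_unif_cont_W_unit e : 0 < e -> exists r, 0 < r /\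
  forall a b, W a -> W b -> d a b < r -> forall t, 0 <= t <= 1 -> d (F t a) (F t b) < e.
Proof.
  intros He. destruct (Hunif e He) as [r [Hr H]]. exists r. split; [exact Hr |].
  intros a b Ha Hb Hab t Ht. apply H; auto. rewrite Rminus_diag, Rabs_R0. exact Hr.
Qed.

Lemma flow_unif_cont_W_nat (n : nat) e : 0 < e -> exists r, 0 < r /\
  forall a b, W a -> W b -> d a b < r -> forall t, 0 <= t <= INR n -> d (F t a) (F t b) < e.
Proof.
  revert e. induction n as [|n IH]; intros e He.
  - exists e. split; [exact He |]. intros a b _ _ Hab t Ht. simpl in Ht.
    replace t with 0 by lra. rewrite !(flow_zero HF); assumption.
  - destruct (flow_unif_cont_W_unit e He) as [r1 [Hr1 H1]].
    destruct (IH e He) as [r2 [Hr2 H2]].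
    destruct (flow_unif_cont_W_unit r2 Hr2) as [r3 [Hr3 H3]].
    exists (Rmin r1 r3). split; [apply Rmin_glb_lt; auto |].
    intros a b Ha Hb Hab t Ht. rewrite S_INR in Ht.
    pose proof (Rmin_l r1 r3). pose proof (Rmin_r r1 r3).
    destruct (Rle_lt_dec t 1) as [Ht1 | Ht1]; [apply H1; auto; lra |].
    replace t with ((t - 1) + 1) by ring. rewrite !(flow_add HF) by lra.
    apply H2; [apply W_forward; auto; lra .. | apply H3; auto; lra | lra].
Qed.

Lemma flow_unif_cont_W B e : 0 < e -> exists r, 0 < r /\
  forall a b, W a -> W b -> d a b < r -> forall t, 0 <= t <= B -> d (F t a) (F t b) < e.
Proof.
  intros He. destruct (nat_above B) as [n Hn]. destruct (flow_unif_cont_W_nat n e He) as [r [Hr H]].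
  exists r. split; [exact Hr |]. intros. apply H; auto. lra.
Qed.

Lemma orbit_near_attractor x e : 0 < e -> exists T, 0 < T /\
  forall t, T <= t -> nbhd d e G (F t x).
Proof.
  intros He. destruct (proj1 (proj2 (proj2 HG)) _ (compact_singleton x) e He) as [T [HT H]].
  exists T. split; [exact HT |]. intros t Ht. apply H; auto.
Qed.

Lemma fixed_in_attractor x : is_fixed F x -> G x.
Proof.
  intros Hx. apply (proj2 (proj2 (proj2 HG)) (fun z => z = x));
    [apply compact_singleton | | reflexivity].
  intros t Ht. split; [intros z ->; apply Hx, Ht |]. intros y ->. exists x. auto.
Qed.

Lemma step_chain_shadows_flow e B : 0 < e -> 0 <= B -> exists eta, 0 < eta /\
  forall a b n z h, step_chain d F eta a b n z h ->
  forall m k, (m <= k <= n)%nat -> (forall j, (m <= j < k)%nat -> W (z j)) ->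
  elapsed h k - elapsed h m <= B -> d (z k) (F (elapsed h k - elapsed h m) (z m)) < e.
Proof.
  intros He HB.
  set (om := e / (2 * B + 1)).
  assert (Hom : 0 < om) by (apply Rdiv_lt_0_compat; lra).
  assert (Hom2 : 2 * B * om < e)
    by (unfold om; apply (Rmult_lt_reg_r (2 * B + 1)); [lra | field_simplify; lra]).
  destruct (flow_unif_cont_W B om Hom) as [r [Hr Hunif_B]].
  exists (Rmin r om). split; [apply Rmin_glb_lt; auto |].
  intros a b n z h HD m k Hmk HW HmkB.
  pose proof (Rmin_l r om). pose proof (Rmin_r r om).
  pose proof (step_chain_telescope Hd HF W (Rmin r om) om B a b n z h W_forward ltac:(assumption)
    ltac:(intros; apply Hunif_B; auto; lra) HD (k - m) m ltac:(lia)) as Htel.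
  pose proof (elapsed_diff_ge (step_chain_times HD) m (k - m) ltac:(lia)) as Hlb.
  replace (m + (k - m))%nat with k in Htel, Hlb by lia.
  specialize (Htel ltac:(intros j Hj; apply HW; lia) HmkB).
  assert (INR (k - m) * om <= 2 * B * om) by (apply Rmult_le_compat_r; lra). lra.
Qed.

(* Let [T] be a time in which [G] attracts [N_e0(G)] up to [e/2].  Until time [T] the chain
   shadows the orbit of [a], hence that of [g]; later on it shadows, over a stretch of
   duration between [T] and [T + 1], the orbit of an earlier chain point near [G]. *)
Lemma step_chain_stays_near e : 0 < e -> e <= e0 -> exists eta r, 0 < eta /\ 0 < r /\
  forall a b n z h g, step_chain d F eta a b n z h -> G g -> d a g < r ->
  forall k, (k <= n)%nat -> nbhd d e G (z k).
Proof.
  intros He Hee0.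
  destruct (Hattr (e/2) ltac:(lra)) as [Ta [HTa HattrTa]].
  destruct (step_chain_shadows_flow (e/2) (Ta + 1) ltac:(lra) ltac:(lra)) as [eta [Heta Hsh]].
  destruct (flow_unif_cont_W (Ta + 1) (e/2) ltac:(lra)) as [r [Hr Hunif_a]].
  exists eta, (Rmin r e0). split; [exact Heta |]. split; [apply Rmin_glb_lt; auto |].
  intros a b n z h g HD Hg Hag k.
  pose proof (Rmin_l r e0). pose proof (Rmin_r r e0). pose proof HD as [Z0 _].
  pose proof (step_chain_times HD) as Hh.
  induction k as [k IHk] using Wf_nat.lt_wf_ind. intros Hkn.
  assert (HW : forall j, (j < k)%nat -> W (z j))
    by (intros j Hj; apply W_of_nbhd, (nbhd_weaken _ e); [lra | apply IHk; lia]).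
  destruct (Rlt_le_dec (elapsed h k) Ta) as [Hk | Hk].
  - pose proof (elapsed_ge Hh k Hkn). pose proof (pos_INR k).
    specialize (Hsh a b n z h HD 0%nat k ltac:(lia) ltac:(intros j Hj; apply HW; lia)).
    simpl in Hsh. rewrite Rminus_0_r, Z0 in Hsh. specialize (Hsh ltac:(lra)).
    assert (Hflow : d (F (elapsed h k) a) (F (elapsed h k) g) < e/2).
    { apply Hunif_a; [apply W_of_nbhd; exists g; split; [exact Hg | lra] |
        apply W_of_nbhd, nbhd_of_mem; auto | lra | lra]. }
    exists (F (elapsed h k) g). split; [apply attractor_forward; auto; lra |].
    pose proof (dist_triangle Hd (z k) (F (elapsed h k) a) (F (elapsed h k) g)). lra.
  - destruct (elapsed_last_crossing Hh Ta 0 k HTa ltac:(lia) ltac:(simpl; lra))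
      as [m [Hm [HmTa HmTa1]]].
    assert (Hzm : nbhd d e0 G (z m)) by (apply (nbhd_weaken _ e); [lra | apply IHk; lia]).
    specialize (Hsh a b n z h HD m k ltac:(lia) ltac:(intros j Hj; apply HW; lia) HmTa1).
    replace e with (e/2 + e/2) by field.
    apply (nbhd_triangle Hd _ (F (elapsed h k - elapsed h m) (z m))).
    + rewrite (dist_sym Hd). exact Hsh.
    + apply (HattrTa _ (z m) HmTa Hzm).
Qed.

(* After the time needed to attract [w] and [N_e0(G)], every jump lands close to [G]. *)
Lemma conley_target_in_attractor w x : conley_succ d F w x -> G x.
Proof.
  intros Hc. apply (compact_closed Hd _ x (proj1 HG)). intros e He.
  set (e1 := Rmin e e0). assert (He1 : 0 < e1) by (apply Rmin_glb_lt; auto).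
  assert (He1e : e1 <= e) by apply Rmin_l. assert (He1e0 : e1 <= e0) by apply Rmin_r.
  destruct (orbit_near_attractor w (e1/2) ltac:(lra)) as [Tw [HTw Hw]].
  destruct (Hattr (e1/2) ltac:(lra)) as [Ta [HTa Ha]].
  pose proof (Rmax_l Tw Ta). pose proof (Rmax_r Tw Ta).
  destruct (Hc (e1/2) (Rmax Tw Ta) ltac:(lra) ltac:(lra)) as [N [xs [ts [HN [Hx0 [HNx Hst]]]]]].
  assert (Hnear : forall i, (1 <= i <= N)%nat -> nbhd d e1 G (xs i)).
  { induction i as [|i IH]; intros Hi; [lia |].
    destruct (Hst i ltac:(lia)) as [Hti Hdi].
    replace e1 with (e1/2 + e1/2) by field.
    apply (nbhd_triangle Hd _ (F (ts i) (xs i))); [exact Hdi |].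
    destruct i as [|i]; [rewrite Hx0; apply Hw; lra |].
    apply Ha; [lra | apply (nbhd_weaken _ e1); [lra | apply IH; lia]]. }
  rewrite <- HNx. apply (nbhd_weaken _ e1); [lra | apply Hnear; lia].
Qed.

Lemma conley_recurrent_in_attractor x : chain_recurrent F (conley_succ d F) x -> G x.
Proof.
  intros [Hfix | [y [_ Hyx]]]; [apply fixed_in_attractor, Hfix |].
  exact (conley_target_in_attractor y x Hyx).
Qed.

Lemma step_chain_to_conley eps T : 0 < eps -> 0 < T -> exists eta, 0 < eta /\
  forall x y n z h, G x -> step_chain d F eta x y n z h -> T <= elapsed h n ->
  conley_chain d F eps T x y.
Proof.
  intros Heps HT.
  destruct (step_chain_stays_near e0 He0 (Rle_refl _)) as [eta1 [r [Heta1 [Hr Hnear]]]].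
  destruct (step_chain_shadows_flow eps (2 * T + 1) Heps ltac:(lra)) as [eta2 [Heta2 Hsh]].
  exists (Rmin eta1 eta2). split; [apply Rmin_glb_lt; auto |].
  intros x y n z h Gx HD Hn.
  pose proof (step_chain_weaken (Rmin_l eta1 eta2) HD) as HD1.
  pose proof (step_chain_weaken (Rmin_r eta1 eta2) HD) as HD2.
  assert (HW : forall k, (k <= n)%nat -> W (z k)).
  { intros k Hk. apply W_of_nbhd.
    apply (Hnear x y n z h x HD1 Gx); [rewrite (dist_refl Hd); exact Hr | exact Hk]. }
  destruct HD as [Z0 [Zn _]]. rewrite <- Z0, <- Zn.
  apply (conley_chain_of_blocks eps T n z h HT (step_chain_times HD1)); [| exact Hn].
  intros i k Hik Hblock. rewrite (dist_sym Hd).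
  apply (Hsh x y n z h HD2 i k Hik); [intros j Hj; apply HW; lia | exact Hblock].
Qed.

(* A long enough loop at [x] in front makes the total duration exceed [T]. *)
Lemma shadow_to_conley x y : G x -> fine_loops d F x -> shadow_succ d F x y -> conley_succ d F x y.
Proof.
  intros Gx Hl Hsh eps T Heps HT.
  destruct (step_chain_to_conley eps T Heps HT) as [eta [Heta Hconley]].
  destruct (shadow_chain_discretize Hd _ _ _ (Hsh eta Heta)) as [n1 [z1 [h1 [HD1 _]]]].
  destruct (nat_above (2 * T)) as [k Hk].
  destruct (fine_loops_long x Hl eta Heta k) as [n2 [z2 [h2 [HD2 Hk2]]]].
  apply (Hconley x y (n2 + n1)%nat (splice n2 z2 z1) (splice n2 h2 h1) Gx);
    [exact (step_chain_app HD2 HD1) |].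
  rewrite elapsed_splice.
  pose proof (elapsed_ge (step_chain_times HD1) n1 (le_n _)).
  pose proof (pos_INR n1). lra.
Qed.

(* Follow the orbit of each [x_i] for the whole time [t_i] and then jump to [x_(i+1)]. *)
Lemma conley_to_shadow x y : G x -> conley_succ d F x y -> shadow_succ d F x y.
Proof.
  intros Gx Hc eps Heps.
  destruct (flow_unif_cont_W_unit eps Heps) as [r [Hr Hunif_1]].
  destruct (Hattr (e0/2) ltac:(lra)) as [Ta [HTa Ha]].
  set (eta := Rmin r (e0/2)).
  assert (Heta : 0 < eta) by (apply Rmin_glb_lt; lra).
  assert (Hetar : eta <= r) by apply Rmin_l. assert (Hetae0 : eta <= e0/2) by apply Rmin_r.
  pose proof (Rmax_l Ta 2). pose proof (Rmax_r Ta 2).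
  destruct (Hc eta (Rmax Ta 2) Heta ltac:(lra)) as [N [xs [ts [HN [Hx0 [HNy Hst]]]]]].
  assert (Hnear : forall i, (i <= N)%nat -> nbhd d e0 G (xs i)).
  { induction i as [|i IH]; intros Hi; [rewrite Hx0; apply nbhd_of_mem; auto |].
    destruct (Hst i ltac:(lia)) as [Hti Hdi].
    replace e0 with (e0/2 + e0/2) by field.
    apply (nbhd_triangle Hd _ (F (ts i) (xs i))); [lra |].
    apply Ha; [lra | apply IH; lia]. }
  assert (Hprepend : forall i L g, (i < N)%nat -> shadow_curve d F eps L g (xs (S i)) y ->
            exists L' g', 2 <= L' /\ shadow_curve d F eps L' g' (xs i) y).
  { intros i L g Hi Hcurve. destruct (Hst i Hi) as [Hti Hdi].
    exists (ts i + L), (glue_curves (fun s => F s (xs i)) g (ts i)).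
    split; [destruct Hcurve; lra |].
    apply (shadow_curve_prepend Hd HF eps (ts i) (xs i) (xs (S i))); [lra | | exact Hcurve].
    intros s Hs. rewrite (dist_sym Hd). apply Hunif_1; [| | lra | exact Hs].
    - apply W_forward; [apply W_of_nbhd, Hnear; lia | lra].
    - apply W_of_nbhd, Hnear. lia. }
  assert (Hcurves : forall q i, (i + S q = N)%nat ->
            exists L g, 2 <= L /\ shadow_curve d F eps L g (xs i) y).
  { induction q as [|q IH]; intros i Hiq.
    - apply (Hprepend i 0 (fun _ => y)); [lia |].
      replace (S i) with N by lia. rewrite HNy. apply (shadow_curve_point Hd HF), Heps.
    - destruct (IH (S i) ltac:(lia)) as [L [g [_ Hcurve]]].
      exact (Hprepend i L g ltac:(lia) Hcurve). }
  destruct (Hcurves (N - 1)%nat 0%nat ltac:(lia)) as [L [g [HL [_ [Hg0 [HgL [Hpc [Hcl _]]]]]]]].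
  exists L, g. split; [lra |]. split; [exact Hpc |]. split; [congruence |]. split; assumption.
Qed.

Lemma fine_loops_in_attractor x : fine_loops d F x -> G x.
Proof.
  intros Hl. apply (compact_closed Hd _ x (proj1 HG)). intros e He.
  set (e1 := Rmin e e0). assert (He1 : 0 < e1) by (apply Rmin_glb_lt; auto).
  assert (He1e : e1 <= e) by apply Rmin_l. assert (He1e0 : e1 <= e0) by apply Rmin_r.
  apply (nbhd_weaken _ e1); [exact He1e |].
  destruct (step_chain_stays_near e1 He1 He1e0) as [eta1 [r [Heta1 [Hr Hnear]]]].
  destruct (orbit_near_attractor x (r/2) ltac:(lra)) as [Tx [HTx Hx]].
  destruct (nat_above (2 * (Tx + 1))) as [K HK].
  destruct (step_chain_tracks_orbit Hd HF x (Tx + 1) K (r/2) ltac:(lra) ltac:(lra))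
    as [eta2 [Heta2 Htrack]].
  set (eta := Rmin eta1 eta2). assert (Heta : 0 < eta) by (apply Rmin_glb_lt; auto).
  destruct (nat_above (2 * Tx)) as [k Hk].
  destruct (fine_loops_long x Hl eta Heta k) as [n [z [h [HD Hkn]]]].
  pose proof (step_chain_times HD) as Hh.
  destruct (elapsed_first_crossing Hh Tx 0 n HTx ltac:(lia) ltac:(simpl; lra))
    as [m [Hm [HmTx HmTx1]]].
  simpl in HmTx, HmTx1. rewrite Rminus_0_r in HmTx, HmTx1.
  pose proof (elapsed_ge Hh m ltac:(lia)).
  assert (HmK : (m <= K)%nat)
    by (destruct (Nat.le_gt_cases m K) as [| Hlt]; [auto | apply lt_INR in Hlt; lra]).
  assert (Hzm : d (z m) (F (elapsed h m) x) < r/2).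
  { apply (Htrack x n z h); [| exact HmK | lia | lra].
    exact (step_chain_weaken (Rmin_r eta1 eta2) HD). }
  destruct (Hx (elapsed h m) HmTx) as [g [Hg Hdg]].
  pose proof (dist_triangle Hd (z m) (F (elapsed h m) x) g).
  pose proof (step_chain_drop m (step_chain_weaken (Rmin_l eta1 eta2) HD)
    ltac:(lia)) as HDm.
  pose proof (Hnear _ _ _ _ _ g HDm Hg ltac:(lra) (n - m)%nat (le_n _)) as Hend.
  cbv beta in Hend. replace (m + (n - m))%nat with n in Hend by lia.
  destruct HD as [_ [Zn _]]. rewrite <- Zn. exact Hend.
Qed.

Lemma conley_recurrent_shadow_recurrent x :
  chain_recurrent F (conley_succ d F) x -> chain_recurrent F (shadow_succ d F) x.
Proof.
  intros [Hfix | [y [Hxy Hyx]]]; [left; exact Hfix | right]. exists y.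
  split; apply conley_to_shadow; try eapply conley_target_in_attractor; eassumption.
Qed.

Lemma shadow_recurrent_conley_recurrent x :
  chain_recurrent F (shadow_succ d F) x -> chain_recurrent F (conley_succ d F) x.
Proof.
  intros Hx. pose proof Hx as [Hfix | [y [Hxy Hyx]]]; [left; exact Hfix | right]. exists y.
  assert (Ly : fine_loops d F y)
    by (apply (shadow_recurrent_fine_loops Hd); right; exists x; auto).
  assert (Lx : fine_loops d F x) by (apply (shadow_recurrent_fine_loops Hd), Hx).
  split; apply shadow_to_conley; auto; apply fine_loops_in_attractor; assumption.
Qed.

Lemma conley_shadow_same_chain_structure :
  same_chain_structure F (conley_succ d F) (shadow_succ d F).
Proof.
  split; [intro x; split; [apply conley_recurrent_shadow_recurrent |
                           apply shadow_recurrent_conley_recurrent] |].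
  intros x y Hx Hy. pose proof (conley_recurrent_in_attractor x Hx) as Gx. split.
  - apply conley_to_shadow, Gx.
  - apply shadow_to_conley; [exact Gx |].
    apply (shadow_recurrent_fine_loops Hd), conley_recurrent_shadow_recurrent, Hx.
Qed.

End Attractor.

Theorem mainTheorem1 (X : Type) (d : X -> X -> R) (F : R -> X -> X)
  (Hd : is_metric d) (HF : is_semiflow d F)
  (Hscd : strong_compact_dynamics d F) :
  (forall x, chain_recurrent F (conley_succ d F) x <->
             chain_recurrent F (shadow_succ d F) x) /\
  (forall x y, chain_recurrent F (conley_succ d F) x ->
               chain_recurrent F (conley_succ d F) y ->
               (conley_succ d F x y <-> shadow_succ d F x y)) /\
  (forall M : X -> Prop, is_node F (conley_succ d F) M <-> is_node F (shadow_succ d F) M) /\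
  ((forall M : X -> Prop, graph_vertex F (conley_succ d F) M <->
                          graph_vertex F (shadow_succ d F) M) /\
   (forall M N : X -> Prop, graph_edge F (conley_succ d F) M N <->
                            graph_edge F (shadow_succ d F) M N)).
Proof.
  destruct Hscd as [G [HG [e0 [He0 [Hattr Hunif]]]]].
  pose proof (conley_shadow_same_chain_structure Hd HF HG He0 Hattr Hunif) as Hs.
  pose proof (same_chain_structure_sym _ _ _ Hs) as Hs'.
  assert (Hnode : forall M, is_node F (conley_succ d F) M <-> is_node F (shadow_succ d F) M)
    by (intro M; split; apply is_node_transfer; assumption).
  split; [exact (proj1 Hs) |]. split; [exact (proj2 Hs) |].
  split; [exact Hnode |]. split; [exact Hnode |].
  intros M N. split; apply graph_edge_transfer; assumption.
Qed.
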